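(* A homeomorphism $f$ of a compact metric space $X$ has the two-sided limit shadowing property if and only if both $f$ and $f^{-1}$ have the limit shadowing property and $W^u(x)\cap W^s(y)\ne\emptyset$ for all $x,y\in X$.
   Context: $W^s(x)=\{y: d(f^n(x),f^n(y))\to0\ (n\to+\infty)\}$, $W^u(x)=\{y: d(f^{-n}(x),f^{-n}(y))\to0\ (n\to+\infty)\}$. A homeomorphism $g$ has the limit shadowing property if for every $(x_k)_{k\in\mathbb{N}}$ with $d(g(x_k),x_{k+1})\to0$ as $k\to\infty$ there is $y$ with $d(g^k(y),x_k)\to0$ as $k\to\infty$. $f$ has the two-sided limit shadowing property if for every $(x_k)_{k\in\mathbb{Z}}$ with $d(f(x_k),x_{k+1})\to0$ as $|k|\to\infty$ there is $y$ with $d(f^k(y),x_k)\to0$ as $|k|\to\infty$. *)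

From Stdlib Require Import Reals ZArith.
Open Scope R_scope.

Record is_metric {X : Type} (d : X -> X -> R) : Prop := {
  dist_nonneg : forall x y, 0 <= d x y;
  dist_eq0 : forall x y, d x y = 0 <-> x = y;
  dist_sym : forall x y, d x y = d y x;
  dist_tri : forall x y z, d x z <= d x y + d y z
}.

Definition is_open {X : Type} (d : X -> X -> R) (U : X -> Prop) : Prop :=
  forall x, U x -> exists r, 0 < r /\ forall y, d x y < r -> U y.

Definition compact_space {X : Type} (d : X -> X -> R) : Prop :=
  forall (I : Type) (U : I -> X -> Prop),
    (forall i, is_open d (U i)) -> (forall x, exists i, U i x) ->
    exists l : list I, forall x, exists i, List.In i l /\ U i x.

Definition continuous_map {X : Type} (d : X -> X -> R) (f : X -> X) : Prop :=
  forall x eps, 0 < eps -> exists delta, 0 < delta /\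
    forall y, d x y < delta -> d (f x) (f y) < eps.

Definition homeomorphism {X : Type} (d : X -> X -> R) (f g : X -> X) : Prop :=
  continuous_map d f /\ continuous_map d g /\
  (forall x, g (f x) = x) /\ (forall x, f (g x) = x).

Fixpoint iter {X : Type} (f : X -> X) (n : nat) (x : X) : X :=
  match n with O => x | S n => f (iter f n x) end.

Definition ziter {X : Type} (f g : X -> X) (k : Z) (x : X) : X :=
  match k with
  | Z0 => x
  | Zpos p => iter f (Pos.to_nat p) x
  | Zneg p => iter g (Pos.to_nat p) x
  end.

Definition tends0_nat (u : nat -> R) : Prop :=
  forall eps, 0 < eps -> exists N, forall k, (N <= k)%nat -> Rabs (u k) < eps.

Definition tends0_absZ (u : Z -> R) : Prop :=
  forall eps, 0 < eps -> exists N, forall k, (N <= Z.abs k)%Z -> Rabs (u k) < eps.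

Definition stable_set {X : Type} (d : X -> X -> R) (f : X -> X) (x : X) (y : X) : Prop :=
  tends0_nat (fun n => d (iter f n x) (iter f n y)).

(* W^u(x) for f is W^s(x) for f^{-1} = g *)
Definition unstable_set {X : Type} (d : X -> X -> R) (g : X -> X) (x : X) (y : X) : Prop :=
  tends0_nat (fun n => d (iter g n x) (iter g n y)).

Definition limit_shadowing {X : Type} (d : X -> X -> R) (h : X -> X) : Prop :=
  forall xs : nat -> X,
    tends0_nat (fun k => d (h (xs k)) (xs (S k))) ->
    exists y, tends0_nat (fun k => d (iter h k y) (xs k)).

Definition two_sided_limit_shadowing {X : Type} (d : X -> X -> R) (f g : X -> X) : Prop :=
  forall xs : Z -> X,
    tends0_absZ (fun k => d (f (xs k)) (xs (Z.succ k))) ->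
    exists y, tends0_absZ (fun k => d (ziter f g k y) (xs k)).

(* Splitting a two-sided sequence at 0 reduces two-sided limit shadowing to
   one-sided shadowing of the two halves, by f and by f^-1.  Conversely, a
   forward and a backward sequence glued at 0 form a two-sided asymptotic
   pseudo-orbit, whatever happens near 0.  Gluing an arbitrary forward
   pseudo-orbit to a genuine backward orbit (or vice versa) yields one-sided
   shadowing, gluing the forward orbit of y to the backward orbit of x yields
   a point of W^u(x) ∩ W^s(y); and the two one-sided shadows p, q of the halves
   of a two-sided pseudo-orbit are joined by any z in W^u(q) ∩ W^s(p).
   Compactness enters only through uniform continuity of f and f^-1, needed to
   move between d(g x_k, x_{k+1}) -> 0 and d(f x_{k+1}, x_k) -> 0. *)

From Pilot Require Import Defs.
From Stdlib Require Import Reals ZArith Lra Lia List.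
Open Scope R_scope.

Lemma tends0_nat_ext (u v : nat -> R) :
  (forall n, u n = v n) -> tends0_nat u -> tends0_nat v.
Proof.
  intros E Hu eps Heps. destruct (Hu eps Heps) as [N HN].
  exists N. intros k Hk. rewrite <- E. auto.
Qed.

Lemma tends0_nat_zero (u : nat -> R) : (forall n, u n = 0) -> tends0_nat u.
Proof. intros E eps Heps. exists O. intros k _. rewrite E, Rabs_R0. exact Heps. Qed.

Lemma tends0_nat_succ (u : nat -> R) :
  tends0_nat (fun n => u (S n)) <-> tends0_nat u.
Proof.
  split; intros Hu eps Heps; destruct (Hu eps Heps) as [N HN].
  - exists (S N). intros [|k] Hk; [lia|]. apply HN. lia.
  - exists N. intros k Hk. apply HN. lia.
Qed.

Lemma tends0_absZ_split (u : Z -> R) :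
  tends0_absZ u <->
  tends0_nat (fun n => u (Z.of_nat n)) /\ tends0_nat (fun n => u (- Z.of_nat n)%Z).
Proof.
  split.
  - intros Hu; split; intros eps Heps; destruct (Hu eps Heps) as [N HN];
      exists (Z.to_nat N); intros k Hk; apply HN; lia.
  - intros [Hpos Hneg] eps Heps.
    destruct (Hpos eps Heps) as [N1 HN1], (Hneg eps Heps) as [N2 HN2].
    exists (Z.of_nat (N1 + N2)). intros k Hk. destruct (Z_le_gt_dec 0 k).
    + replace k with (Z.of_nat (Z.to_nat k)) by lia. apply HN1. lia.
    + replace k with (- Z.of_nat (Z.to_nat (- k)))%Z by lia. apply HN2. lia.
Qed.

Lemma ziter_of_nat {X : Type} (f g : X -> X) n x :
  ziter f g (Z.of_nat n) x = Defs.iter f n x.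
Proof. destruct n; [reflexivity|]. simpl. rewrite SuccNat2Pos.id_succ. reflexivity. Qed.

Lemma ziter_opp_of_nat {X : Type} (f g : X -> X) n x :
  ziter f g (- Z.of_nat n)%Z x = Defs.iter g n x.
Proof. destruct n; [reflexivity|]. simpl. rewrite SuccNat2Pos.id_succ. reflexivity. Qed.

(* [b 0] is never used: index 0 belongs to the forward half [a]. *)
Definition glue {X : Type} (a b : nat -> X) (k : Z) : X :=
  if Z.leb 0 k then a (Z.to_nat k) else b (Z.to_nat (- k)).

Lemma glue_of_nat {X : Type} (a b : nat -> X) n : glue a b (Z.of_nat n) = a n.
Proof. unfold glue. rewrite (proj2 (Z.leb_le _ _)) by lia. now rewrite Nat2Z.id. Qed.

Lemma glue_opp_of_nat_succ {X : Type} (a b : nat -> X) n :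
  glue a b (- Z.of_nat (S n))%Z = b (S n).
Proof. unfold glue. rewrite (proj2 (Z.leb_gt _ _)) by lia. f_equal. lia. Qed.

Lemma list_pos_lower_bound {I : Type} (r : I -> R) (l : list I) :
  (forall i, 0 < r i) -> exists m, 0 < m /\ forall i, In i l -> m <= r i.
Proof.
  intros Hr. induction l as [|j l [m [Hm Hml]]].
  - exists 1. split; [lra | intros _ []].
  - exists (Rmin (r j) m). split; [now apply Rmin_glb_lt|].
    intros i [<- | Hi]; [apply Rmin_l|].
    eapply Rle_trans; [apply Rmin_r | auto].
Qed.

Section Metric.
Variables (X : Type) (d : X -> X -> R).
Hypothesis Hmet : is_metric d.

Lemma dist_self x : d x x = 0.
Proof. now apply (Defs.dist_eq0 d Hmet). Qed.

Lemma Rabs_dist x y : Rabs (d x y) = d x y.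
Proof. apply Rabs_pos_eq, (Defs.dist_nonneg d Hmet). Qed.

Lemma tends0_nat_dist_sym (a b : nat -> X) :
  tends0_nat (fun n => d (a n) (b n)) -> tends0_nat (fun n => d (b n) (a n)).
Proof. apply tends0_nat_ext. intros n. apply (Defs.dist_sym d Hmet). Qed.

Lemma tends0_nat_dist_tri (a b c : nat -> X) :
  tends0_nat (fun n => d (a n) (b n)) -> tends0_nat (fun n => d (b n) (c n)) ->
  tends0_nat (fun n => d (a n) (c n)).
Proof.
  intros Hab Hbc eps Heps.
  destruct (Hab (eps / 2)) as [N1 HN1], (Hbc (eps / 2)) as [N2 HN2]; try lra.
  exists (N1 + N2)%nat. intros k Hk.
  specialize (HN1 k ltac:(lia)). specialize (HN2 k ltac:(lia)).
  rewrite Rabs_dist in *. pose proof (Defs.dist_tri d Hmet (a k) (b k) (c k)). lra.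
Qed.

Definition uniformly_continuous (h : X -> X) : Prop :=
  forall eps, 0 < eps -> exists delta, 0 < delta /\
    forall x y, d x y < delta -> d (h x) (h y) < eps.

Lemma tends0_nat_dist_map h (a b : nat -> X) : uniformly_continuous h ->
  tends0_nat (fun n => d (a n) (b n)) -> tends0_nat (fun n => d (h (a n)) (h (b n))).
Proof.
  intros Hh Hab eps Heps. destruct (Hh eps Heps) as [delta [Hdelta Hd]].
  destruct (Hab delta Hdelta) as [N HN]. exists N. intros k Hk.
  specialize (HN k Hk). rewrite Rabs_dist in *. auto.
Qed.

(* Lebesgue-number argument: cover X by the balls B(c, r/2) on which
   continuity at c holds with radius r and tolerance eps/2. *)
Lemma compact_uniformly_continuous h :
  compact_space d -> continuous_map d h -> uniformly_continuous h.
Proof.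
  intros Hcpt Hh eps Heps.
  set (good := fun p : X * R => 0 < snd p /\
         forall y, d (fst p) y < snd p -> d (h (fst p)) (h y) < eps / 2).
  set (rad := fun i : {p | good p} => snd (proj1_sig i) / 2).
  destruct (Hcpt {p | good p} (fun i y => d (fst (proj1_sig i)) y < rad i))
    as [l Hl].
  - intros [[c r] [Hr Hcr]] x Hx. unfold rad in *; simpl in *.
    exists (r / 2 - d c x). split; [lra|].
    intros y Hy. pose proof (Defs.dist_tri d Hmet c x y). lra.
  - intros x. destruct (Hh x (eps / 2)) as [delta [Hdelta Hd]]; [lra|].
    exists (exist good (x, delta) (conj Hdelta Hd)).
    unfold rad; simpl. rewrite dist_self. lra.
  - destruct (list_pos_lower_bound rad l) as [m [Hm Hml]].
    { intros [[c r] [Hr Hcr]]. unfold rad; simpl in *. lra. }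
    exists m. split; [exact Hm|]. intros x y Hxy.
    destruct (Hl x) as [i [Hin Hix]]. specialize (Hml i Hin).
    destruct i as [[c r] [Hr Hcr]]. unfold rad in *; simpl in *.
    assert (Hcx : d (h c) (h x) < eps / 2) by (apply Hcr; lra).
    assert (Hcy : d (h c) (h y) < eps / 2).
    { apply Hcr. pose proof (Defs.dist_tri d Hmet c x y). lra. }
    pose proof (Defs.dist_tri d Hmet (h x) (h c) (h y)).
    rewrite (Defs.dist_sym d Hmet (h x) (h c)) in *. lra.
Qed.

Section Homeomorphism.
Variables f g : X -> X.
Hypotheses (Hgf : forall x, g (f x) = x) (Hfg : forall x, f (g x) = x).
Hypotheses (Uf : uniformly_continuous f) (Ug : uniformly_continuous g).

Lemma backward_pseudo_orbit_of_inverse (b : nat -> X) :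
  tends0_nat (fun n => d (g (b n)) (b (S n))) ->
  tends0_nat (fun n => d (f (b (S n))) (b n)).
Proof.
  intros Hb. apply tends0_nat_dist_sym.
  eapply tends0_nat_ext; [| exact (tends0_nat_dist_map f _ _ Uf Hb)].
  intros n; cbv beta. now rewrite Hfg.
Qed.

Lemma inverse_pseudo_orbit_of_backward (b : nat -> X) :
  tends0_nat (fun n => d (f (b (S n))) (b n)) ->
  tends0_nat (fun n => d (g (b n)) (b (S n))).
Proof.
  intros Hb. apply tends0_nat_dist_sym.
  eapply tends0_nat_ext; [| exact (tends0_nat_dist_map g _ _ Ug Hb)].
  intros n; cbv beta. now rewrite Hgf.
Qed.

Lemma glue_pseudo_orbit (a b : nat -> X) :
  tends0_nat (fun n => d (f (a n)) (a (S n))) ->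
  tends0_nat (fun n => d (f (b (S n))) (b n)) ->
  tends0_absZ (fun k => d (f (glue a b k)) (glue a b (Z.succ k))).
Proof.
  intros Ha Hb. apply tends0_absZ_split. split.
  - eapply tends0_nat_ext; [| exact Ha]. intros n; cbv beta.
    now rewrite <- Nat2Z.inj_succ, !glue_of_nat.
  - apply tends0_nat_succ, tends0_nat_succ.
    eapply tends0_nat_ext; [| exact (proj2 (tends0_nat_succ _) Hb)].
    intros n; cbv beta.
    replace (Z.succ (- Z.of_nat (S (S n)))) with (- Z.of_nat (S n))%Z by lia.
    now rewrite !glue_opp_of_nat_succ.
Qed.

Lemma two_sided_shadow_glue (a b : nat -> X) :
  two_sided_limit_shadowing d f g ->
  tends0_nat (fun n => d (f (a n)) (a (S n))) ->
  tends0_nat (fun n => d (f (b (S n))) (b n)) ->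
  exists y, tends0_nat (fun n => d (Defs.iter f n y) (a n)) /\
            tends0_nat (fun n => d (Defs.iter g n y) (b n)).
Proof.
  intros H2 Ha Hb. destruct (H2 _ (glue_pseudo_orbit a b Ha Hb)) as [y Hy].
  exists y. destruct (proj1 (tends0_absZ_split _) Hy) as [Hpos Hneg]. split.
  - eapply tends0_nat_ext; [| exact Hpos]. intros n; cbv beta.
    now rewrite ziter_of_nat, glue_of_nat.
  - apply tends0_nat_succ. apply tends0_nat_succ in Hneg.
    eapply tends0_nat_ext; [| exact Hneg]. intros n; cbv beta.
    now rewrite ziter_opp_of_nat, glue_opp_of_nat_succ.
Qed.

Lemma backward_orbit_pseudo_orbit x :
  tends0_nat (fun n => d (f (Defs.iter g (S n) x)) (Defs.iter g n x)).
Proof. apply tends0_nat_zero. intros n; simpl. rewrite Hfg. apply dist_self. Qed.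

Lemma forward_orbit_pseudo_orbit x :
  tends0_nat (fun n => d (f (Defs.iter f n x)) (Defs.iter f (S n) x)).
Proof. apply tends0_nat_zero. intros n. apply dist_self. Qed.

Lemma two_sided_limit_shadowing_forward :
  two_sided_limit_shadowing d f g -> limit_shadowing d f.
Proof.
  intros H2 xs Hxs.
  destruct (two_sided_shadow_glue xs (fun n => Defs.iter g n (xs O)) H2 Hxs
              (backward_orbit_pseudo_orbit _)) as [y [Hy _]].
  now exists y.
Qed.

Lemma two_sided_limit_shadowing_backward :
  two_sided_limit_shadowing d f g -> limit_shadowing d g.
Proof.
  intros H2 xs Hxs.
  destruct (two_sided_shadow_glue (fun n => Defs.iter f n (xs O)) xs H2
              (forward_orbit_pseudo_orbit _)
              (backward_pseudo_orbit_of_inverse xs Hxs)) as [y [_ Hy]].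
  now exists y.
Qed.

Lemma two_sided_limit_shadowing_heteroclinic :
  two_sided_limit_shadowing d f g ->
  forall x y, exists z, unstable_set d g x z /\ stable_set d f y z.
Proof.
  intros H2 x y.
  destruct (two_sided_shadow_glue (fun n => Defs.iter f n y) (fun n => Defs.iter g n x) H2
              (forward_orbit_pseudo_orbit _) (backward_orbit_pseudo_orbit _))
    as [z [Hzy Hzx]].
  exists z. split; now apply tends0_nat_dist_sym.
Qed.

Lemma limit_shadowing_two_sided :
  limit_shadowing d f -> limit_shadowing d g ->
  (forall x y, exists z, unstable_set d g x z /\ stable_set d f y z) ->
  two_sided_limit_shadowing d f g.
Proof.
  intros LSf LSg W xs Hxs.
  destruct (proj1 (tends0_absZ_split _) Hxs) as [Hpos Hneg].
  destruct (LSf (fun n => xs (Z.of_nat n))) as [p Hp].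
  { eapply tends0_nat_ext; [| exact Hpos]. intros n; cbv beta. now rewrite Nat2Z.inj_succ. }
  destruct (LSg (fun n => xs (- Z.of_nat n)%Z)) as [q Hq].
  { apply inverse_pseudo_orbit_of_backward.
    apply tends0_nat_succ in Hneg.
    eapply tends0_nat_ext; [| exact Hneg]. intros n; cbv beta.
    now replace (Z.succ (- Z.of_nat (S n))) with (- Z.of_nat n)%Z by lia. }
  destruct (W q p) as [z [Hqz Hpz]].
  exists z. apply tends0_absZ_split. split.
  - eapply tends0_nat_ext; [| exact (tends0_nat_dist_tri _ _ _
                                       (tends0_nat_dist_sym _ _ Hpz) Hp)].
    intros n; cbv beta. now rewrite ziter_of_nat.
  - eapply tends0_nat_ext; [| exact (tends0_nat_dist_tri _ _ _
                                       (tends0_nat_dist_sym _ _ Hqz) Hq)].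
    intros n; cbv beta. now rewrite ziter_opp_of_nat.
Qed.

End Homeomorphism.
End Metric.

Theorem mainTheorem9 (X : Type) (d : X -> X -> R) (f g : X -> X)
  (Hmet : is_metric d) (Hcpt : compact_space d) (Hhom : homeomorphism d f g) :
  two_sided_limit_shadowing d f g <->
  (limit_shadowing d f /\ limit_shadowing d g /\
   forall x y : X, exists z : X, unstable_set d g x z /\ stable_set d f y z).
Proof.
  destruct Hhom as [Hf [Hg [Hgf Hfg]]].
  pose proof (compact_uniformly_continuous X d Hmet f Hcpt Hf) as Uf.
  pose proof (compact_uniformly_continuous X d Hmet g Hcpt Hg) as Ug.
  split.
  - intros H2. split; [| split].
    + exact (two_sided_limit_shadowing_forward X d Hmet f g Hfg H2).
    + exact (two_sided_limit_shadowing_backward X d Hmet f g Hfg Uf H2).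
    + exact (two_sided_limit_shadowing_heteroclinic X d Hmet f g Hfg H2).
  - intros [LSf [LSg W]].
    exact (limit_shadowing_two_sided X d Hmet f g Hgf Ug LSf LSg W).
Qed.
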